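(* Let $F$ be a graph of diameter $2$, $n=|V(F)|$, $t=\delta(F)$, and let $l>n$ be an integer. Then: (1) $\delta_i=f_{2l}$ for all $i\in\{1,\dots,t\}$; (2) $\delta_i=\delta_l$ for all $i\in\{t+1,\dots,l\}$; (3) $\delta_i=0$ for all $i\in\{l+t,l+t+1,\dots,2l-1\}$.
   Context: All graphs are simple, finite, undirected. The $F$-degree of a vertex $v$ in $G$ is the number of subgraphs of $G$ (not necessarily induced) isomorphic to $F$ and containing $v$. $A_{2l-1}$ is the graph with vertex set $\{1,\dots,2l-1\}$ in which distinct $i,j$ are adjacent iff $|i-j|\le l-1$; $F_{2l}$ is obtained from $A_{2l-1}$ by adding a new vertex $2l$ joined exactly to $1,\dots,t$. $z_i$ is the $F$-degree of $i$ in $A_{2l-1}$, $f_i$ is the $F$-degree of $i$ in $F_{2l}$, and $\delta_i=f_i-z_i$ for $i\in\{1,\dots,2l-1\}$. *)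

From mathcomp Require Import all_boot all_order all_algebra.
Set Implicit Arguments. Unset Strict Implicit. Unset Printing Implicit Defensive.

(* A simple graph on a finite type V is a symmetric irreflexive relation. *)

(* (S, E) is a (not necessarily induced) subgraph of G: every edge of E is a
   2-element subset of S whose two vertices are adjacent in G. *)
Definition is_subgraph (V : finType) (G : rel V)
  (p : {set V} * {set {set V}}) : bool :=
  [forall e in p.2, [&& #|e| == 2, e \subset p.1 &
     [forall x in e, forall y in e, (x != y) ==> G x y]]].

Definition iso_to (n : nat) (F : rel 'I_n) (V : finType)
  (p : {set V} * {set {set V}}) : bool :=
  [exists f : {ffun 'I_n -> V},
     [&& injectiveb f, p.1 == f @: setT &
         [forall x, forall y, F x y == ([set f x; f y] \in p.2)]]].

Definition Fdeg (n : nat) (F : rel 'I_n) (V : finType) (G : rel V) (v : V) : nat :=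
  #|[set p : {set V} * {set {set V}} |
       [&& is_subgraph G p, iso_to F p & v \in p.1]]|.

Definition mindeg (n : nat) (F : rel 'I_n) : nat :=
  \big[minn/n]_(x : 'I_n) #|[set y | F x y]|.

Definition diam2 (n : nat) (F : rel 'I_n) : Prop :=
  (forall x y : 'I_n, x != y -> F x y \/ exists z, F x z /\ F z y) /\
  (exists x y : 'I_n, x != y /\ ~~ F x y).

(* Vertex labelled i (1-based, as in the paper) is the ordinal i-1. *)

Definition Agraph (l : nat) : rel 'I_(2 * l - 1) :=
  fun x y => (x != y) && (x - y <= l - 1) && (y - x <= l - 1).

(* F_{2l}: A_{2l-1} plus vertex 2l (ordinal 2l-1) joined exactly to 1..t
   (ordinals 0..t-1). *)
Definition Fgraph (l t : nat) : rel 'I_(2 * l) :=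
  fun x y =>
    (x != y) &&
    [|| [&& (x < 2 * l - 1)%N, (y < 2 * l - 1)%N, x - y <= l - 1 & y - x <= l - 1],
        (x == 2 * l - 1 :> nat) && (y < t)%N
      | (y == 2 * l - 1 :> nat) && (x < t)%N].

(* F-degree of the vertex with 1-based label i in a graph on 'I_m (0 if absent). *)
Definition Fdeg_lab (n : nat) (F : rel 'I_n) (m : nat) (G : rel 'I_m) (i : nat) : nat :=
  match @insub nat (fun k => k < m)%N _ i.-1 with
  | Some v => Fdeg F G v
  | None => 0
  end.

Definition zdeg (n : nat) (F : rel 'I_n) (l i : nat) : nat :=
  Fdeg_lab F (@Agraph l) i.
Definition fdeg (n : nat) (F : rel 'I_n) (l t i : nat) : nat :=
  Fdeg_lab F (@Fgraph l t) i.
Definition delta (n : nat) (F : rel 'I_n) (l t i : nat) : int :=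
  ((fdeg F l t i)%:Z - (zdeg F l i)%:Z)%R.

From mathcomp Require Import all_boot all_order all_algebra perm zify.
Set Implicit Arguments. Unset Strict Implicit. Unset Printing Implicit Defensive.

(* Let w be the new vertex 2l of F_{2l}.  The copies of F in F_{2l} avoiding w
   are exactly the copies in A_{2l-1}, so delta_i counts the copies through
   both i and w.  In such a copy, the preimage of w has at least t neighbours,
   whose images must fill N(w) = {1,...,t}; hence every copy through w
   contains 1,...,t, which gives (1).  As F has diameter 2, every other vertex
   of a copy through w is at distance at most 2 from w, hence lies in
   {1,...,l+t-1}; this gives (3).  Within {1,...,l+t-1} and w, any two
   vertices among t+1,...,l are twins (adjacent to everything except w), so
   the transposition exchanging them maps the copies through one onto the
   copies through the other, which gives (2).  The hypothesis l > n only
   serves to get t < l. *)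

Local Notation graph_on V := ({set V} * {set {set V}})%type.

Section GraphImage.

Variables (V W : finType) (G : rel V) (H : rel W) (g : V -> W).

Definition graph_image (p : graph_on V) : graph_on W :=
  (g @: p.1, (fun e : {set V} => g @: e) @: p.2).

Lemma subgraph_edge (p : graph_on V) (e : {set V}) :
  is_subgraph G p -> e \in p.2 ->
  [&& #|e| == 2, e \subset p.1 & [forall x in e, forall y in e, (x != y) ==> G x y]].
Proof. by move/forall_inP => /(_ e). Qed.

Lemma imset_inj_in (D s e : {set V}) : {in D &, injective g} ->
  s \subset D -> e \subset D -> g @: s = g @: e -> s = e.
Proof.
move=> injg.
wlog suff: s e / s \subset D -> e \subset D -> g @: s = g @: e -> s \subset e.
  by move=> le sD eD gse; apply/eqP; rewrite eqEsubset le // le.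
move=> sD eD gse; apply/subsetP => x xs.
have /imsetP[y ye gxy] : g x \in g @: e by rewrite -gse imset_f.
by rewrite (injg x y (subsetP sD x xs) (subsetP eD y ye) gxy).
Qed.

Lemma subgraph_image (p : graph_on V) : {in p.1 &, injective g} ->
  {in p.1 &, forall x y, G x y -> H (g x) (g y)} ->
  is_subgraph G p -> is_subgraph H (graph_image p).
Proof.
move=> injg gH sGp; apply/forall_inP => _ /imsetP[e ep ->].
case/and3P: (subgraph_edge sGp ep) => /eqP e2 ep1 /forall_inP Ge.
have injge : {in e &, injective g}.
  by move=> x y xe ye; apply: injg; apply: (subsetP ep1).
rewrite card_in_imset // e2 eqxx imsetS //=.
apply/forall_inP => _ /imsetP[x xe ->]; apply/forall_inP => _ /imsetP[y ye ->].
apply/implyP => gxy; have xy : x != y by apply: contraNneq gxy => ->.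
apply: gH; rewrite ?(subsetP ep1) //.
exact: implyP (forall_inP (Ge x xe) y ye) xy.
Qed.

Lemma iso_to_image n (F : rel 'I_n) (p : graph_on V) :
  {in p.1 &, injective g} -> is_subgraph G p -> iso_to F p -> iso_to F (graph_image p).
Proof.
move=> injg sGp /existsP[f /and3P[/injectiveP injf /eqP p1 /forallP Fp]].
have fp1 x : f x \in p.1 by rewrite p1 imset_f.
apply/existsP; exists [ffun x => g (f x)]; apply/and3P; split.
- apply/injectiveP => x y; rewrite !ffunE => gfxy.
  exact/injf/(injg _ _ (fp1 x) (fp1 y)).
- by rewrite /= p1 -imset_comp; apply/eqP/eq_imset => x; rewrite ffunE.
- apply/forallP => x; apply/forallP => y; rewrite !ffunE /=.
  rewrite (eqP (forallP (Fp x) y)).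
  have -> : [set g (f x); g (f y)] = g @: [set f x; f y] by rewrite imsetU1 imset_set1.
  apply/eqP; apply/idP/idP => [fxy | /imsetP[e ep gxye]]; first exact: imset_f.
  have [_ ep1 _] := and3P (subgraph_edge sGp ep).
  have xyp1 : [set f x; f y] \subset p.1.
    by apply/subsetP => z; rewrite !inE => /orP[]/eqP->.
  by rewrite (imset_inj_in injg xyp1 ep1 gxye).
Qed.

End GraphImage.

Lemma graph_imageK (V W : finType) (G : rel V) (g : V -> W) (r : W -> V)
    (p : graph_on V) :
  {in p.1, cancel g r} -> is_subgraph G p -> graph_image r (graph_image g p) = p.
Proof.
case: p => [S E] gK sGp; rewrite /graph_image /= -!imset_comp; congr pair.
  by rewrite -[RHS]imset_id; apply: eq_in_imset => x /gK.
rewrite -[RHS]imset_id; apply: eq_in_imset => e ep /=.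
have [_ eS _] := and3P (subgraph_edge sGp ep).
rewrite -imset_comp -[RHS]imset_id; apply: eq_in_imset => x xe.
exact: gK (subsetP eS x xe).
Qed.

Lemma card_in_bij (T1 T2 : finType) (A : {set T1}) (B : {set T2})
  (f : T1 -> T2) (g : T2 -> T1) :
  {in A, forall x, f x \in B} -> {in B, forall y, g y \in A} ->
  {in A, cancel f g} -> {in B, cancel g f} -> #|A| = #|B|.
Proof.
move=> fAB gBA fK gK; rewrite -(card_in_imset (can_in_inj fK)).
apply: eq_card => y; apply/imsetP/idP => [[x xA ->] | yB]; first exact: fAB.
by exists (g y); rewrite ?gBA ?gK.
Qed.

Definition within_dist2 (T : eqType) (R : rel T) :=
  forall x y, x != y -> R x y \/ exists z, R x z /\ R z y.

Section Copies.

Variables (n : nat) (F : rel 'I_n) (V : finType) (G : rel V).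

Definition copies (P : pred {set V}) : {set graph_on V} :=
  [set p | [&& is_subgraph G p, iso_to F p & P p.1]].

Lemma FdegE v : Fdeg F G v = #|copies (fun S => v \in S)|.
Proof. by []. Qed.

Lemma Fdeg_split v w : Fdeg F G v =
  #|copies (fun S => (v \in S) && (w \in S))| +
  #|copies (fun S => (v \in S) && (w \notin S))|.
Proof.
rewrite FdegE -(cardsID [set p : graph_on V | w \in p.1]); congr (_ + _);
  by apply: eq_card => p; rewrite !inE; case: (w \in p.1); rewrite ?andbT ?andbF.
Qed.

Lemma iso_to_edge (p : graph_on V) (f : 'I_n -> V) x y : irreflexive F ->
  is_subgraph G p -> injective f -> F x y = ([set f x; f y] \in p.2) ->
  F x y -> G (f x) (f y).
Proof.
move=> irrF sGp injf Fxy_p Fxy.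
have fxy : f x != f y by apply: contraTneq Fxy => /injf ->; rewrite irrF.
rewrite Fxy_p in Fxy; have [_ _ /forall_inP Ge] := and3P (subgraph_edge sGp Fxy).
exact: implyP (forall_inP (Ge (f x) (set21 _ _)) (f y) (set22 _ _)) fxy.
Qed.

Lemma copy_within_dist2 (p : graph_on V) : irreflexive F -> within_dist2 F ->
  is_subgraph G p -> iso_to F p ->
  {in p.1 &, forall a b, a != b -> G a b \/ exists c, G a c /\ G c b}.
Proof.
move=> irrF dF sGp /existsP[f /and3P[/injectiveP injf /eqP p1 /forallP Fp]].
have edge x y := iso_to_edge irrF sGp injf (eqP (forallP (Fp x) y)).
move=> _ _ /[!p1] /imsetP[x _ ->] /imsetP[y _ ->] fxy.
have xy : x != y by apply: contraNneq fxy => ->.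
have [Fxy | [z [Fxz Fzy]]] := dF x y xy.
  by left; apply: edge.
by right; exists (f z); split; apply: edge.
Qed.

End Copies.

Lemma card_copies_transport n (F : rel 'I_n) (V W : finType) (G : rel V) (H : rel W)
    (P : pred {set V}) (Q : pred {set W}) (g : V -> W) (r : W -> V) :
  (forall p : graph_on V, is_subgraph G p -> iso_to F p -> P p.1 ->
     [/\ {in p.1 &, injective g}, {in p.1 &, forall x y, G x y -> H (g x) (g y)},
         {in p.1, cancel g r} & Q (g @: p.1)]) ->
  (forall p : graph_on W, is_subgraph H p -> iso_to F p -> Q p.1 ->
     [/\ {in p.1 &, injective r}, {in p.1 &, forall x y, H x y -> G (r x) (r y)},
         {in p.1, cancel r g} & P (r @: p.1)]) ->
  #|copies F G P| = #|copies F H Q|.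
Proof.
move=> hg hr.
apply: (card_in_bij (f := graph_image g) (g := graph_image r))
  => p /[!inE] /and3P[sp ip Pp].
- have [injg Hg _ Qg] := hg p sp ip Pp.
  by rewrite (subgraph_image injg Hg sp) (iso_to_image injg sp ip).
- have [injr Gr _ Pr] := hr p sp ip Pp.
  by rewrite (subgraph_image injr Gr sp) (iso_to_image injr sp ip).
- by have [_ _ gK _] := hg p sp ip Pp; apply: graph_imageK gK sp.
- by have [_ _ rK _] := hr p sp ip Pp; apply: graph_imageK rK sp.
Qed.

Lemma Fdeg_labE n (F : rel 'I_n) m (G : rel 'I_m) i (v : 'I_m) :
  v = i.-1 :> nat -> Fdeg_lab F G i = Fdeg F G v.
Proof. by move=> vi; rewrite /Fdeg_lab -vi valK. Qed.

Lemma bigmin_le (I : eqType) (r : seq I) (f : I -> nat) d a :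
  a \in r -> \big[minn/d]_(i <- r) f i <= f a.
Proof.
elim: r => [//|x r IHr]; rewrite inE big_cons => /orP[/eqP<- | /IHr].
  exact: geq_minl.
exact: leq_trans (geq_minr _ _).
Qed.

Lemma mindeg_le n (F : rel 'I_n) x : mindeg F <= #|[set y | F x y]|.
Proof. exact/bigmin_le/mem_index_enum. Qed.

Lemma mindeg_le_size n (F : rel 'I_n) : mindeg F <= n.
Proof.
apply: (big_ind (fun m => m <= n)) => // [a b an _ | x _].
  exact: leq_trans (geq_minl a b) an.
by apply: leq_trans (max_card _) _; rewrite card_ord.
Qed.

Lemma tperm_twins (T : finType) (G : rel T) (R : pred T) (a c : T) :
  symmetric G -> irreflexive G ->
  {in R, forall y, y != a -> y != c -> G a y = G c y} ->
  {in R &, forall x y, G (tperm a c x) (tperm a c y) = G x y}.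
Proof.
move=> symG irrG twin x y xR yR.
case: tpermP => [->|->|/eqP xa /eqP xc]; case: tpermP => [->|->|/eqP ya /eqP yc];
  rewrite ?irrG ?(symG _ a) ?(symG _ c) ?twin //.
Qed.

Section Fgraph.
Variables (l t : nat).
Local Notation FG := (@Fgraph l t).

Lemma Fgraph_sym : symmetric FG.
Proof. by move=> x y; rewrite /Fgraph -!val_eqE /=; lia. Qed.

Lemma Fgraph_irr : irreflexive FG.
Proof. by move=> x; rewrite /Fgraph eqxx. Qed.

Lemma Fgraph_widen (le_l : 2 * l - 1 <= 2 * l) (x y : 'I_(2 * l - 1)) :
  FG (widen_ord le_l x) (widen_ord le_l y) = Agraph x y.
Proof.
rewrite /Fgraph /Agraph -!val_eqE /=.
have := ltn_ord x; have := ltn_ord y; lia.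
Qed.

Variable w : 'I_(2 * l).
Hypothesis w_val : w = 2 * l - 1 :> nat.

Lemma Fgraph_apex x : t < l -> FG w x = (x < t).
Proof. rewrite /Fgraph -val_eqE /= w_val; have := ltn_ord x; lia. Qed.

Lemma Fgraph_twins (a c : 'I_(2 * l)) : t <= a < l -> t <= c < l ->
  {in [pred y : 'I_(2 * l) | (y < l + t - 1) || (y == w)],
    forall y, y != a -> y != c -> FG a y = FG c y}.
Proof.
move=> ha hc y /[!inE]; rewrite /Fgraph -!val_eqE /= w_val; have := ltn_ord y; lia.
Qed.

End Fgraph.

Section ApexCopies.

Variables (n : nat) (F : rel 'I_n) (l t : nat) (w : 'I_(2 * l)).
Hypothesis w_val : w = 2 * l - 1 :> nat.
Local Notation FG := (@Fgraph l t).

Definition apex_copies (v : 'I_(2 * l)) :=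
  copies F FG (fun S => (v \in S) && (w \in S)).

Lemma Agraph_copies (le_l : 2 * l - 1 <= 2 * l) (u : 'I_(2 * l - 1)) :
  Fdeg F (@Agraph l) u =
  #|copies F FG (fun S => (widen_ord le_l u \in S) && (w \notin S))|.
Proof.
pose narrow (x : 'I_(2 * l)) := insubd u (val x).
have widenK : cancel (widen_ord le_l) narrow.
  by move=> x; apply: val_inj; rewrite /= insubdK //; exact (ltn_ord x).
rewrite FdegE; apply: (card_copies_transport (g := widen_ord le_l) (r := narrow)).
- move=> p _ _ up; split.
  + exact: in2W (can_inj widenK).
  + by move=> x y _ _; rewrite Fgraph_widen.
  + exact: in1W widenK.
  + rewrite imset_f //=; apply/imsetP => -[x _ /(congr1 val) /=].
    by have := ltn_ord x; lia.
- move=> p _ _ /andP[up wp].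
  have narrowK : {in p.1, cancel narrow (widen_ord le_l)}.
    move=> x xp; apply: val_inj; rewrite /= insubdK //.
    have xw : x != w by apply: contraNneq wp => <-.
    by move: xw; rewrite -val_eqE /= w_val; have := ltn_ord x; lia.
  split; first exact: can_in_inj narrowK.
  + by move=> x y xp yp; rewrite -(Fgraph_widen t le_l) !narrowK.
  + exact: narrowK.
  + by rewrite -[u]widenK imset_f.
Qed.

Lemma delta_apex i (v : 'I_(2 * l)) : 0 < i < 2 * l -> v = i.-1 :> nat ->
  delta F l t i = #|apex_copies v|.
Proof.
move=> hi vi.
have le_l : 2 * l - 1 <= 2 * l by apply: leq_subr.
have iu : i.-1 < 2 * l - 1 by lia.
have vE : v = widen_ord le_l (Ordinal iu) by apply: val_inj.
rewrite /delta /fdeg /zdeg (Fdeg_labE _ _ vi) (Fdeg_labE _ _ (v := Ordinal iu)) //.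
by rewrite (Fdeg_split _ _ v w) (Agraph_copies le_l) -vE PoszD GRing.addrK.
Qed.

Hypotheses (irrF : irreflexive F) (t_lt_l : t < l).

Lemma apex_copy_low (p : graph_on 'I_(2 * l)) : (forall x, t <= #|[set y | F x y]|) ->
  is_subgraph FG p -> iso_to F p -> w \in p.1 ->
  forall v : 'I_(2 * l), v < t -> v \in p.1.
Proof.
move=> tdeg sGp /existsP[f /and3P[/injectiveP injf /eqP p1 /forallP Fp]].
rewrite p1 => /imsetP[a _ wa] v vt.
have edge x y := iso_to_edge irrF sGp injf (eqP (forallP (Fp x) y)).
pose low := [set u : 'I_(2 * l) | u < t].
have Na_low : f @: [set y | F a y] \subset low.
  apply/subsetP => _ /imsetP[y /[!inE] Fay ->].
  by rewrite -(Fgraph_apex w_val _ t_lt_l) wa edge.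
have low_le : #|low| <= t.
  have t_le : t <= 2 * l by lia.
  have : low \subset [set widen_ord t_le i | i : 'I_t].
    apply/subsetP => u /[!inE] ut.
    by apply/imsetP; exists (Ordinal ut); last apply: val_inj.
  move/subset_leq_card/leq_trans; apply.
  by apply: leq_trans (leq_imset_card _ _) _; rewrite card_ord.
have Na_eq : f @: [set y | F a y] = low.
  apply/eqP; rewrite eqEcard Na_low (card_imset _ injf).
  exact: leq_trans low_le (tdeg a).
have : v \in f @: [set y | F a y] by rewrite Na_eq inE.
by case/imsetP => y _ ->; rewrite imset_f.
Qed.

Lemma apex_copies_low (v : 'I_(2 * l)) : (forall x, t <= #|[set y | F x y]|) ->
  v < t -> apex_copies v = copies F FG (fun S => w \in S).
Proof.
move=> tdeg vt; apply/setP => p; rewrite !inE.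
apply/and3P/and3P => -[sGp iFp]; first by case/andP.
by move=> wp; rewrite (apex_copy_low tdeg sGp iFp wp).
Qed.

Hypothesis dF : within_dist2 F.

Lemma apex_copy_near (p : graph_on 'I_(2 * l)) :
  is_subgraph FG p -> iso_to F p -> w \in p.1 ->
  {in p.1, forall b, b != w -> b < l + t - 1}.
Proof.
move=> sGp iFp wp b bp; rewrite -val_eqE /= w_val => bw.
have := ltn_ord b.
have wb : w != b by rewrite -val_eqE /= w_val eq_sym.
case: (copy_within_dist2 irrF dF sGp iFp wp bp wb).
  by rewrite (Fgraph_apex w_val _ t_lt_l); lia.
case=> c []; rewrite (Fgraph_apex w_val _ t_lt_l) /Fgraph -!val_eqE /=.
have := ltn_ord c; lia.
Qed.

Lemma apex_copies_high (v : 'I_(2 * l)) :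
  l + t - 1 <= v -> v != w -> apex_copies v = set0.
Proof.
move=> hv vw; apply/setP => p; rewrite !inE.
apply/negP => /and3P[sGp iFp /andP[vp wp]].
by have := apex_copy_near sGp iFp wp vp vw; rewrite ltnNge hv.
Qed.

Lemma tperm_apex_copy (a c : 'I_(2 * l)) (p : graph_on 'I_(2 * l)) :
  t <= a < l -> t <= c < l -> is_subgraph FG p -> iso_to F p -> w \in p.1 ->
  [/\ {in p.1 &, injective (tperm a c)},
      {in p.1 &, forall x y, FG x y -> FG (tperm a c x) (tperm a c y)},
      {in p.1, cancel (tperm a c) (tperm a c)} & tperm a c w = w].
Proof.
move=> ha hc sGp iFp wp.
have near : {subset p.1 <= [pred y : 'I_(2 * l) | (y < l + t - 1) || (y == w)]}.
  move=> y yp; rewrite inE; case: eqP => [_|/eqP yw]; first by rewrite orbT.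
  by rewrite (apex_copy_near sGp iFp wp yp yw).
split; [exact: in2W perm_inj | | exact: in1W (tpermK a c) | ].
  move=> x y xp yp; rewrite (tperm_twins (@Fgraph_sym l t) (@Fgraph_irr l t)
    (Fgraph_twins w_val ha hc)) ?near //.
by apply: tpermD; rewrite -val_eqE /= w_val; lia.
Qed.

Lemma apex_copies_swap (a c : 'I_(2 * l)) :
  t <= a < l -> t <= c < l -> #|apex_copies a| = #|apex_copies c|.
Proof.
move=> ha hc; apply: (card_copies_transport (g := tperm a c) (r := tperm a c)).
  move=> p sGp iFp /andP[ap wp].
  have [? ? ? wK] := tperm_apex_copy ha hc sGp iFp wp; split => //.
  by rewrite -{1}(tpermL a c) -wK !imset_f.
move=> p sGp iFp /andP[cp wp].
have [? ? ? wK] := tperm_apex_copy ha hc sGp iFp wp; split => //.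
by rewrite -{1}(tpermR a c) -wK !imset_f.
Qed.

End ApexCopies.

Theorem lemma5 (n : nat) (F : rel 'I_n) (l : nat) :
  symmetric F -> irreflexive F -> diam2 F -> (n < l)%N ->
  let t := mindeg F in
  (forall i : nat, (1 <= i <= t)%N -> delta F l t i = Posz (fdeg F l t (2 * l))) /\
  (forall i : nat, (t.+1 <= i <= l)%N -> delta F l t i = delta F l t l) /\
  (forall i : nat, (l + t <= i <= 2 * l - 1)%N -> delta F l t i = 0%R).
Proof.
move=> _ irrF [dF _] n_lt_l t.
have t_lt_l : t < l := leq_ltn_trans (mindeg_le_size F) n_lt_l.
have w_lt : 2 * l - 1 < 2 * l by lia.
pose w := Ordinal w_lt; have w_val : w = 2 * l - 1 :> nat by [].
have deltaE i (i_lt : i.-1 < 2 * l) : 0 < i < 2 * l ->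
    delta F l t i = #|apex_copies F t w (Ordinal i_lt)|.
  by move=> hi; apply: delta_apex.
split; [|split] => i hi; have i_lt : i.-1 < 2 * l by lia.
- rewrite deltaE ?(apex_copies_low w_val irrF t_lt_l (mindeg_le F)) //=; try lia.
  by rewrite /fdeg (Fdeg_labE F _ (v := w)) //=; lia.
- have l_lt : l.-1 < 2 * l by lia.
  rewrite (deltaE i i_lt) ?(deltaE l l_lt); try lia.
  by congr Posz; apply: (apex_copies_swap w_val irrF t_lt_l dF) => /=; lia.
- rewrite deltaE ?(apex_copies_high w_val irrF t_lt_l dF) ?cards0 //=; try lia.
  by rewrite -val_eqE /=; lia.
Qed.
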